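(* Let $\Gamma,\alpha>0$ and $l(y)=\frac{\alpha p(y)}{\alpha+\sqrt\Gamma g(y)}$. Then $H(y)=y^3 l(y)$ is strictly increasing on $(0,\infty)$; in particular $y\,l'(y)+3l(y)>0$ for all $y>0$.
   Context: $g(x)=\coth x-\frac1x$ and $p(x)=\frac{g(x)}{x}=\frac{x\coth x-1}{x^2}$ for $x>0$. *)

From Stdlib Require Import Reals.
From Coquelicot Require Import Coquelicot.
Open Scope R_scope.

Definition coth (x : R) : R := cosh x / sinh x.

Definition g (x : R) : R := coth x - 1 / x.

Definition p (x : R) : R := g x / x.

Definition l (Gamma alpha : R) (y : R) : R :=
  alpha * p y / (alpha + sqrt Gamma * g y).

Definition H (Gamma alpha : R) (y : R) : R := y ^ 3 * l Gamma alpha y.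

From Stdlib Require Import Reals Lra Psatz.
From Coquelicot Require Import Coquelicot.
Open Scope R_scope.

(* Proof idea.  Write G = g y, D = g' y = 1/y^2 - 1/sinh^2 y and
   P = alpha + sqrt Gamma * G.  Since l = alpha (G/y) / P, a direct
   computation gives the identity

       y l'(y) + 3 l(y) = alpha (alpha y D + 2 G P) / (y P^2).

   Both D >= 0 (because sinh y > y) and G > 0 (because y cosh y > sinh y)
   hold for y > 0, so the right-hand side is positive.  As
   H'(y) = y^2 (y l'(y) + 3 l(y)), the mean value theorem then gives the
   strict monotonicity of H on (0, oo). *)

Lemma increasing_of_pos_derive (f df : R -> R) (a b : R) :
  a < b ->
  (forall c, a <= c <= b -> is_derive f c (df c)) ->
  (forall c, a < c < b -> 0 < df c) ->
  f a < f b.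
Proof.
  intros Hab Hder Hpos.
  destruct (MVT_cor2 f df a b Hab) as [c [Hmvt Hc]].
  - intros c Hc. apply is_derive_Reals, Hder, Hc.
  - specialize (Hpos c Hc). nra.
Qed.

Lemma sinh_pos (x : R) : 0 < x -> 0 < sinh x.
Proof. intros Hx. rewrite <- sinh_0. now apply sinh_lt. Qed.

Lemma cosh_gt_1 (x : R) : 0 < x -> 1 < cosh x.
Proof.
  intros Hx. unfold cosh. rewrite exp_Ropp.
  assert (He : 1 < exp x) by (rewrite <- exp_0; now apply exp_increasing).
  assert (Hinv : exp x * / exp x = 1) by (field; lra).
  assert (0 < / exp x) by (apply Rinv_0_lt_compat; lra).
  nra.
Qed.

(* x < sinh x on (0, oo): the difference has derivative cosh t - 1 > 0. *)
Lemma sinh_gt_id (x : R) : 0 < x -> x < sinh x.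
Proof.
  intros Hx.
  assert (Hmono : sinh 0 - 0 < sinh x - x).
  { apply (increasing_of_pos_derive (fun t => sinh t - t)
             (fun t => cosh t - 1)); [exact Hx | |].
    - intros c _. auto_derive; [exact I | ring].
    - intros c Hc. pose proof (cosh_gt_1 c (proj1 Hc)). lra. }
  rewrite sinh_0 in Hmono. lra.
Qed.

(* sinh x < x cosh x on (0, oo): the difference has derivative
   t sinh t > 0. *)
Lemma sinh_lt_id_cosh (x : R) : 0 < x -> sinh x < x * cosh x.
Proof.
  intros Hx.
  assert (Hmono : 0 * cosh 0 - sinh 0 < x * cosh x - sinh x).
  { apply (increasing_of_pos_derive (fun t => t * cosh t - sinh t)
             (fun t => t * sinh t)); [exact Hx | |].
    - intros c _. auto_derive; [exact I | ring].
    - intros c Hc. pose proof (sinh_pos c (proj1 Hc)). nra. }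
  rewrite sinh_0 in Hmono. lra.
Qed.

(* g > 0 on (0, oo), equivalently y cosh y > sinh y. *)
Lemma g_pos (y : R) : 0 < y -> 0 < g y.
Proof.
  intros Hy. pose proof (sinh_pos y Hy). pose proof (sinh_lt_id_cosh y Hy).
  unfold g, coth.
  apply Rmult_lt_reg_r with (y * sinh y); [nra |].
  field_simplify; lra.
Qed.

Lemma cosh_sq_sub_sinh_sq (x : R) : cosh x ^ 2 - sinh x ^ 2 = 1.
Proof.
  unfold cosh, sinh. rewrite exp_Ropp.
  assert (exp x > 0) by apply exp_pos.
  field. lra.
Qed.

Definition dg (y : R) : R := 1 / y ^ 2 - 1 / sinh y ^ 2.

Lemma is_derive_g (y : R) : 0 < y -> is_derive g y (dg y).
Proof.
  intros Hy. pose proof (sinh_pos y Hy) as Hs.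
  pose proof (cosh_sq_sub_sinh_sq y) as Hpyth.
  unfold g, coth, dg. auto_derive.
  - repeat split; lra.
  - field_simplify; try lra. f_equal. nra.
Qed.

(* g' >= 0 on (0, oo), since sinh y > y. *)
Lemma dg_nonneg (y : R) : 0 < y -> 0 <= dg y.
Proof.
  intros Hy. pose proof (sinh_gt_id y Hy).
  assert (Hsq : y ^ 2 < sinh y ^ 2) by nra.
  assert (Hinv : / sinh y ^ 2 < / y ^ 2).
  { apply Rinv_lt_contravar; [apply Rmult_lt_0_compat; apply pow_lt |]; lra. }
  unfold dg, Rdiv. lra.
Qed.

Section Ratio.

Variables Gamma alpha : R.
Hypothesis ha : 0 < alpha.

Let P (y : R) : R := alpha + sqrt Gamma * g y.

Lemma P_pos (y : R) : 0 < y -> 0 < P y.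
Proof.
  intros Hy. pose proof (g_pos y Hy). pose proof (sqrt_pos Gamma).
  unfold P. nra.
Qed.

Lemma is_derive_l (y : R) : 0 < y ->
  is_derive (l Gamma alpha) y
    (alpha * (dg y * y * P y - g y * (P y + y * sqrt Gamma * dg y))
       / (y * P y) ^ 2).
Proof.
  intros Hy. pose proof (P_pos y Hy). pose proof (is_derive_g y Hy) as Hg.
  unfold l, p, P in *. auto_derive.
  - repeat split; try (eexists; eassumption); lra.
  - change (Derive (fun x => g x) y) with (Derive g y).
    rewrite (is_derive_unique _ _ _ Hg).
    field. split; lra.
Qed.

Lemma euler_combination_l (y : R) : 0 < y ->
  y * Derive (l Gamma alpha) y + 3 * l Gamma alpha y
  = alpha * (alpha * y * dg y + 2 * g y * P y) / (y * P y ^ 2).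
Proof.
  intros Hy. pose proof (P_pos y Hy).
  rewrite (is_derive_unique _ _ _ (is_derive_l y Hy)).
  unfold l, p. fold (P y).
  unfold P in *. field. split; lra.
Qed.

(* The combination y l' + 3 l is positive: both summands of the
   numerator are nonnegative and 2 g P > 0. *)
Lemma euler_combination_l_pos (y : R) : 0 < y ->
  0 < y * Derive (l Gamma alpha) y + 3 * l Gamma alpha y.
Proof.
  intros Hy. rewrite (euler_combination_l y Hy).
  pose proof (P_pos y Hy). pose proof (g_pos y Hy). pose proof (dg_nonneg y Hy).
  apply Rdiv_lt_0_compat.
  - apply Rmult_lt_0_compat; [exact ha |].
    assert (0 <= alpha * y * dg y) by (apply Rmult_le_pos; nra).
    nra.
  - apply Rmult_lt_0_compat; [| apply pow_lt]; lra.
Qed.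

Lemma is_derive_H (y : R) : 0 < y ->
  is_derive (H Gamma alpha) y
    (y ^ 2 * (y * Derive (l Gamma alpha) y + 3 * l Gamma alpha y)).
Proof.
  intros Hy. unfold H. auto_derive.
  - eexists. now apply is_derive_l.
  - change (Derive (fun t => l Gamma alpha t) y) with (Derive (l Gamma alpha) y).
    ring.
Qed.

End Ratio.

Theorem mainTheorem3 (Gamma alpha : R) (hG : 0 < Gamma) (ha : 0 < alpha) :
  (forall x y : R, 0 < x -> x < y -> H Gamma alpha x < H Gamma alpha y) /\
  (forall y : R, 0 < y ->
     ex_derive (l Gamma alpha) y /\
     y * Derive (l Gamma alpha) y + 3 * l Gamma alpha y > 0).
Proof.
  split.
  - intros x y Hx Hxy.
    apply (increasing_of_pos_derive _
             (fun t => t ^ 2 * (t * Derive (l Gamma alpha) t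
                                + 3 * l Gamma alpha t))); [exact Hxy | |].
    + intros t Ht. apply is_derive_H; lra.
    + intros t Ht. apply Rmult_lt_0_compat.
      * apply pow_lt; lra.
      * apply euler_combination_l_pos; lra.
  - intros y Hy. split.
    + eexists. now apply is_derive_l.
    + now apply Rlt_gt, euler_combination_l_pos.
Qed.
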